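(* Let $k\ge2$ and let $\mathcal C_2$ be the binary $(2k+1,k)$ code with generator matrix $G_c=(e_1\ \ e_1\ \ e_1+e_2\ \ e_2\ \ e_2+e_3\ \ e_3\ \cdots\ e_{k-1}+e_k\ \ e_k\ \ e_k)$. Then $\mathcal C_2$ has the Easy Repair Property.
   Context: $e_i$ denotes the $i$-th standard unit vector of $\mathbb F_2^k$. Let $g_1,\dots,g_{2k+1}$ be the columns of $G_c$; nodes are the coordinates of codewords $c=uG_c$. An erasure pattern is a set $S^e$ of erased nodes; the others are live. It is correctable if no two distinct codewords coincide on all live positions. A node $c_i$ is related to distinct nodes $c_{j_1},\dots,c_{j_\gamma}$ (all different from $c_i$) if $g_i=g_{j_1}+\dots+g_{j_\gamma}$. An erased node allows for easy repair if it is related to $\gamma\le2$ live nodes. An erasure pattern allows for easy repair if all erased nodes can be recovered by a sequence of easy repairs, where after each step the recovered node is regarded as live. A code has the Easy Repair Property if every correctable erasure pattern allows for easy repair. *)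

From HB Require Import structures.
From mathcomp Require Import all_boot all_order all_algebra.
Set Implicit Arguments. Unset Strict Implicit. Unset Printing Implicit Defensive.
Import GRing.Theory.
Local Open Scope ring_scope.

(* Generic notions for a binary linear code with generator matrix
   G : 'M['F_2]_(k, n); node j is coordinate j of the codeword u *m G,
   and g_j = col j G. *)
Section EasyRepair.
Variables (k n : nat) (G : 'M['F_2]_(k, n)).

Definition codeword (u : 'rV['F_2]_k) : 'rV['F_2]_n := u *m G.

Definition correctable (S : {set 'I_n}) : Prop :=
  forall u v : 'rV['F_2]_k,
    (forall j, j \notin S -> codeword u 0 j = codeword v 0 j) ->
    codeword u = codeword v.

Definition related (i : 'I_n) (T : {set 'I_n}) : Prop :=
  i \notin T /\ col i G = \sum_(j in T) col j G.

Definition easy_repair (live : {set 'I_n}) (i : 'I_n) : Prop :=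
  exists T : {set 'I_n},
    [/\ T \subset live, (0 < #|T| <= 2)%N & related i T].

(* all erased nodes can be recovered by a sequence of easy repairs,
   each recovered node being regarded as live afterwards *)
Definition allows_easy_repair (S : {set 'I_n}) : Prop :=
  exists s : seq 'I_n,
    perm_eq s (enum S) /\
    forall (s1 s2 : seq 'I_n) (x : 'I_n), s = s1 ++ x :: s2 ->
      easy_repair (~: S :|: [set y in s1]) x.

Definition easy_repair_property : Prop :=
  forall S : {set 'I_n}, correctable S -> allows_easy_repair S.

End EasyRepair.

(* 0-based unit vector: e_at i l = (e_{i+1})_{l+1} *)
Definition e_at (i l : nat) : 'F_2 := if l == i then 1 else 0.

(* Entry (l, j) (0-based) of G_c = (e1 e1 e1+e2 e2 e2+e3 e3 ... e_{k-1}+e_k e_k e_k):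
   column 0 = e1, column 2k = e_k, odd column 2i+1 = e_{i+1},
   even column 2i (1 <= i <= k-1) = e_i + e_{i+1}  (1-based unit vectors). *)
Definition gc_entry (k j l : nat) : 'F_2 :=
  if j == 0%N then e_at 0 l
  else if j == (2 * k)%N then e_at k.-1 l
  else if odd j then e_at j./2 l
  else e_at (j./2).-1 l + e_at j./2 l.

Definition Gc (k : nat) : 'M['F_2]_(k, 2 * k + 1) :=
  \matrix_(l < k, j < 2 * k + 1) gc_entry k j l.

From mathcomp Require Import all_boot all_order all_algebra.
From mathcomp Require Import zify.
Set Implicit Arguments. Unset Strict Implicit. Unset Printing Implicit Defensive.
Import GRing.Theory.

(* The nodes of G_c fall into blocks {2m-1, 2m, 2m+1} (cut down to {0, 1}
   and {2k-1, 2k} at the ends) whose columns sum to zero, so an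
   erased node that is the only erased node of its block is the sum of the at
   most two other, live, nodes of the block.  If no block has exactly one
   erased node, let u_l = 1 iff the node 2l+1, whose column is the unit vector
   e_{l+1}, is erased: the codeword u G_c vanishes on every live node, since a
   live even node 2m sees u_{m-1} + u_m, the parity of the erased nodes among
   its two neighbours.  Correctability forces u = 0, so all odd nodes are live,
   and then any erased (even) node would be alone in its block.  Repairing one
   node and inducting on the number of erasures gives the property. *)

Lemma addrr_F2 (x : 'F_2) : (x + x = 0)%R.
Proof. by case: x => [[|[|]]] //= ?; apply/eqP. Qed.

Lemma addmx_F2 m n (A : 'M['F_2]_(m, n)) : (A + A = 0)%R.
Proof. by apply/matrixP => i j; rewrite !mxE addrr_F2. Qed.

Lemma F2_sum3 m n (A B C : 'M['F_2]_(m, n)) : (A + B + C = 0 -> A = B + C)%R.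
Proof. by move=> sum0; rewrite -[LHS]addr0 -sum0 !addrA addmx_F2 add0r. Qed.

Section EasyRepairCriterion.
Variables (k n : nat) (G : 'M['F_2]_(k, n)).

Lemma easy_repair_subset (L L' : {set 'I_n}) x :
  L \subset L' -> easy_repair G L x -> easy_repair G L' x.
Proof.
by move=> sLL' [T [sTL cardT relT]]; exists T; split=> //; apply: subset_trans sLL'.
Qed.

Lemma easy_repair1 (L : {set 'I_n}) x a :
  x \notin L -> a \in L -> col x G = col a G -> easy_repair G L x.
Proof.
move=> Lx La colx; exists [set a]; split; rewrite ?sub1set ?cards1 //.
split; last by rewrite big_set1.
by rewrite in_set1; apply: contraNneq Lx => ->.
Qed.

Lemma easy_repair2 (L : {set 'I_n}) x a b :
  x \notin L -> a \in L -> b \in L -> a != b ->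
  col x G = (col a G + col b G)%R -> easy_repair G L x.
Proof.
move=> Lx La Lb neq_ab colx; exists [set a; b].
split; rewrite ?subUset ?sub1set ?La ?Lb ?cards2 ?neq_ab //.
split; last by rewrite big_setU1 ?in_set1 //= big_set1.
by rewrite in_set2; apply/norP; split; apply: contraNneq Lx => ->.
Qed.

Lemma correctable_subset (S S' : {set 'I_n}) :
  S' \subset S -> correctable G S -> correctable G S'.
Proof.
move=> sS'S HS u v eq_live; apply: HS => j Sj; apply: eq_live.
by apply: contra Sj; apply: (subsetP sS'S).
Qed.

Lemma correctable_codeword_eq0 (S : {set 'I_n}) u :
  correctable G S -> (forall j, j \notin S -> codeword G u 0%R j = 0%R) ->
  codeword G u = 0%R.
Proof.
move=> HS u_live; rewrite -(mul0mx 1 G); apply: HS => j Sj.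
by rewrite u_live // /codeword mul0mx mxE.
Qed.

Lemma allows_easy_repair_setD1 (S : {set 'I_n}) x :
  x \in S -> easy_repair G (~: S) x -> allows_easy_repair G (S :\ x) ->
  allows_easy_repair G S.
Proof.
move=> Sx rep_x [s [perm_s rep_s]]; exists (x :: s); split.
  apply: perm_trans (_ : perm_eq _ (x :: enum (S :\ x))) _; first by rewrite perm_cons.
  apply: uniq_perm; rewrite /= ?enum_uniq ?mem_enum ?setD11 //.
  by move=> y; rewrite inE !mem_enum !inE; case: eqVneq => [->|].
case=> [|z s1] s2 y /= [<-].
  by move=> _; apply: easy_repair_subset rep_x; apply: subsetUl.
move=> eq_s; apply: easy_repair_subset (rep_s _ _ _ eq_s).
apply/subsetP => t; rewrite !inE.
by case: eqVneq => [->|_] //=; rewrite !orbT.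
Qed.

Lemma easy_repair_property_of_step :
  (forall S, correctable G S -> S != set0 ->
     exists2 x, x \in S & easy_repair G (~: S) x) ->
  easy_repair_property G.
Proof.
move=> step S; have [m leSm] := ubnP #|S|; elim: m S leSm => // m IH S leSm HS.
have [->|S0] := eqVneq S set0.
  by exists [::]; split; [rewrite enum_set0 | case=> [|? ?] ? ?].
have [x Sx rep_x] := step S HS S0.
apply: (allows_easy_repair_setD1 Sx rep_x); apply: IH.
  by rewrite (cardsD1 x S) Sx in leSm.
by apply: correctable_subset HS; apply: subD1set.
Qed.

End EasyRepairCriterion.

Section GcCode.
Variable k : nat.
Hypothesis k_gt0 : (0 < k)%N.

Definition node (i : nat) : 'I_(2 * k + 1) :=
  insubd (Ordinal (leq_addl (2 * k) 1)) i.

Lemma val_node i : (i < 2 * k + 1)%N -> val (node i) = i.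
Proof. by move=> lt_i; rewrite val_insubd lt_i. Qed.

Lemma nodeK (j : 'I_(2 * k + 1)) : node j = j.
Proof. exact: valKd. Qed.

Lemma node_inj i i' : (i < 2 * k + 1)%N -> (i' < 2 * k + 1)%N ->
  i != i' -> node i != node i'.
Proof. by move=> lt_i lt_i' neq_ii'; rewrite -(inj_eq val_inj) !val_node. Qed.

(* Nodes are also addressed by natural numbers; those beyond 2k count as
   live, so node 2k+1 may serve as the missing right neighbour of node 2k. *)
Definition erased (S : {set 'I_(2 * k + 1)}) (i : nat) : bool :=
  (i < 2 * k + 1) && (node i \in S).

Lemma erased_node S i : (i < 2 * k + 1)%N -> erased S i = (node i \in S).
Proof. by rewrite /erased => ->. Qed.

Lemma erasedE S (j : 'I_(2 * k + 1)) : erased S j = (j \in S).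
Proof. by rewrite erased_node ?nodeK. Qed.

Definition unitv (i : nat) : 'cV['F_2]_k := \col_(l < k) e_at i l.

Definition colv (i : nat) : 'cV['F_2]_k := \col_(l < k) gc_entry k i l.

Lemma col_Gc (j : 'I_(2 * k + 1)) : col j (Gc k) = colv j.
Proof. by apply/matrixP => l z; rewrite !mxE. Qed.

Lemma col_node i : (i < 2 * k + 1)%N -> col (node i) (Gc k) = colv i.
Proof. by move=> lt_i; rewrite col_Gc val_node. Qed.

Lemma unitv_oob i : (k <= i)%N -> unitv i = 0%R.
Proof.
move=> le_ki; apply/matrixP => l z; rewrite !mxE /e_at.
by have -> : (nat_of_ord l == i) = false by apply/eqP; have := ltn_ord l; lia.
Qed.

Lemma colv_odd m : colv (2 * m + 1) = unitv m.
Proof.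
apply/matrixP => l z; rewrite !mxE /gc_entry.
have -> : (2 * m + 1 == 0)%N = false by lia.
have -> : (2 * m + 1 == 2 * k)%N = false by lia.
have -> : odd (2 * m + 1) by lia.
by have -> : ((2 * m + 1)./2 = m)%N by lia.
Qed.

Lemma colv_even m : (m <= k)%N -> colv (2 * m) = (unitv m.-1 *+ (0 < m) + unitv m)%R.
Proof.
move=> le_mk; case: (posnP m) => [-> | m_gt0].
  by apply/matrixP => l z; rewrite !mxE add0r.
have [eq_mk | lt_mk] := eqVneq m k.
  rewrite eq_mk (unitv_oob (leqnn k)) addr0.
  apply/matrixP => l z; rewrite !mxE /gc_entry.
  have -> : (2 * k == 0)%N = false by lia.
  by rewrite eqxx.
apply/matrixP => l z; rewrite !mxE /gc_entry.
have -> : (2 * m == 0)%N = false by lia.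
have -> : (2 * m == 2 * k)%N = false by lia.
have -> : odd (2 * m) = false by lia.
by have -> : ((2 * m)./2 = m)%N by lia.
Qed.

Lemma colv_first : colv 0 = colv 1.
Proof. by rewrite (colv_even (leq0n k)) (colv_odd 0) add0r. Qed.

Lemma colv_last : colv (2 * k) = colv (2 * k).-1.
Proof.
have -> : (2 * k).-1 = 2 * k.-1 + 1 by lia.
by rewrite colv_even // colv_odd (unitv_oob (leqnn k)) k_gt0 addr0.
Qed.

Lemma colv_triangle m : (0 < m < k)%N ->
  (colv (2 * m).-1 + colv (2 * m) + colv (2 * m).+1 = 0)%R.
Proof.
case/andP=> m_gt0 lt_mk.
have -> : (2 * m).-1 = 2 * m.-1 + 1 by lia.
have -> : (2 * m).+1 = 2 * m + 1 by lia.
rewrite colv_odd colv_even ?(ltnW lt_mk) // colv_odd m_gt0.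
by rewrite addrA addmx_F2 add0r addmx_F2.
Qed.

Definition easy_repairable (S : {set 'I_(2 * k + 1)}) : Prop :=
  exists2 x, x \in S & easy_repair (Gc k) (~: S) x.

Lemma easy_repairable1 S x a : (x < 2 * k + 1)%N -> (a < 2 * k + 1)%N ->
  erased S x -> ~~ erased S a -> colv x = colv a -> easy_repairable S.
Proof.
move=> lt_x lt_a; rewrite !erased_node // => Sx Sa colx.
exists (node x) => //; apply: (easy_repair1 (a := node a)); rewrite ?inE ?negbK //.
by rewrite !col_node.
Qed.

Lemma easy_repairable2 S x a b : (x < 2 * k + 1)%N -> (a < 2 * k + 1)%N ->
  (b < 2 * k + 1)%N -> a != b -> erased S x -> ~~ erased S a -> ~~ erased S b ->
  colv x = (colv a + colv b)%R -> easy_repairable S.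
Proof.
move=> lt_x lt_a lt_b neq_ab; rewrite !erased_node // => Sx Sa Sb colx.
exists (node x) => //; apply: (easy_repair2 (a := node a) (b := node b)).
- by rewrite inE negbK.
- by rewrite inE.
- by rewrite inE.
- exact: node_inj.
- by rewrite !col_node.
Qed.

(* Block m is {2m-1, 2m, 2m+1}; the guard removes the phantom node
   (2 * 0).-1 = 0 of block 0. *)
Definition lonely S m : bool :=
  ((0 < m) && erased S (2 * m).-1) + erased S (2 * m) + erased S (2 * m).+1 == 1.

Lemma lonely_repair S m : (m <= k)%N -> lonely S m -> easy_repairable S.
Proof.
rewrite /lonely => le_mk; case: (posnP m) => [-> | m_gt0] /=.
  rewrite muln0; case S0: (erased S 0); case S1: (erased S 1) => //= _.
  - by apply: (@easy_repairable1 S 0 1); rewrite ?S0 ?S1 ?colv_first //; lia.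
  - by apply: (@easy_repairable1 S 1 0); rewrite ?S0 ?S1 ?colv_first //; lia.
have [-> | lt_mk] := eqVneq m k.
  have -> : erased S (2 * k).+1 = false by rewrite /erased; apply/negbTE; lia.
  rewrite addn0.
  case Sl: (erased S (2 * k).-1); case Sk: (erased S (2 * k)) => //= _.
  - by apply: (@easy_repairable1 S (2 * k).-1 (2 * k));
      rewrite ?Sl ?Sk ?colv_last //; lia.
  - by apply: (@easy_repairable1 S (2 * k) (2 * k).-1);
      rewrite ?Sl ?Sk ?colv_last //; lia.
have tri := @colv_triangle m (ltac:(lia)).
case Sl: (erased S (2 * m).-1); case Sm: (erased S (2 * m));
  case Sr: (erased S (2 * m).+1) => //= _.
- apply: (@easy_repairable2 S (2 * m).-1 (2 * m) (2 * m).+1); rewrite ?Sl ?Sm ?Sr //;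
    try (apply/eqP; lia); try lia.
  exact: F2_sum3.
- apply: (@easy_repairable2 S (2 * m) (2 * m).-1 (2 * m).+1); rewrite ?Sl ?Sm ?Sr //;
    try (apply/eqP; lia); try lia.
  by apply: F2_sum3; rewrite (addrC (colv _)).
- apply: (@easy_repairable2 S (2 * m).+1 (2 * m).-1 (2 * m)); rewrite ?Sl ?Sm ?Sr //;
    try (apply/eqP; lia); try lia.
  by apply: F2_sum3; rewrite -addrA addrC.
Qed.

Definition odd_erased_row S : 'rV['F_2]_k := \row_(l < k) (erased S (2 * l + 1))%:R%R.

Lemma odd_erased_row_unitv S i :
  (odd_erased_row S *m unitv i)%R 0%R 0%R = (erased S (2 * i + 1))%:R%R.
Proof.
case: (ltnP i k) => [lt_ik | le_ki]; last first.
  rewrite unitv_oob // mulmx0 mxE /erased.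
  by have -> : (2 * i + 1 < 2 * k + 1) = false by apply/negbTE; lia.
rewrite mxE (bigD1 (Ordinal lt_ik)) //= !mxE /e_at eqxx mulr1 big1 ?addr0 //.
by move=> l neq_l; rewrite !mxE /e_at ifN ?mulr0.
Qed.

Lemma codewordE u (j : 'I_(2 * k + 1)) :
  codeword (Gc k) u 0%R j = (u *m colv j)%R 0%R 0%R.
Proof. by rewrite !mxE; apply: eq_bigr => l _; rewrite !mxE. Qed.

Lemma codeword_odd S (j : 'I_(2 * k + 1)) m : j = 2 * m + 1 :> nat ->
  codeword (Gc k) (odd_erased_row S) 0%R j = (j \in S)%:R%R.
Proof.
by move=> val_j; rewrite codewordE val_j colv_odd odd_erased_row_unitv -val_j erasedE.
Qed.

Lemma codeword_even S (j : 'I_(2 * k + 1)) m : j = 2 * m :> nat ->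
  codeword (Gc k) (odd_erased_row S) 0%R j =
  (((0 < m)%N && erased S (2 * m).-1)%:R + (erased S (2 * m).+1)%:R)%R.
Proof.
move=> val_j; have le_mk : (m <= k)%N by have := ltn_ord j; lia.
rewrite codewordE val_j colv_even //; case: (posnP m) => [-> | m_gt0] /=.
  by rewrite mulr0n add0r odd_erased_row_unitv mulr0n add0r.
rewrite mulr1n mulmxDr mxE !odd_erased_row_unitv.
have -> : 2 * m.-1 + 1 = (2 * m).-1 by lia.
by rewrite addn1.
Qed.

Section NoLonelyBlock.
Variable S : {set 'I_(2 * k + 1)}.
Hypothesis no_lonely : forall m, (m <= k)%N -> ~~ lonely S m.

Lemma odd_erased_row_live j :
  j \notin S -> codeword (Gc k) (odd_erased_row S) 0%R j = 0%R.
Proof.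
move=> Sj; have lt_j := ltn_ord j; have [odd_j | even_j] := boolP (odd j).
  by rewrite (@codeword_odd _ _ j./2) ?(negbTE Sj) //; lia.
rewrite (@codeword_even _ _ j./2); last by lia.
have := no_lonely (ltac:(lia) : (j./2 <= k)%N); rewrite /lonely.
have -> : 2 * j./2 = j by lia.
rewrite erasedE (negbTE Sj) addn0.
by case: (_ && _); case: (erased _ _) => //= _; rewrite addrr_F2.
Qed.

Lemma no_lonely_set0 : correctable (Gc k) S -> S = set0.
Proof.
move=> HS; have row0 := correctable_codeword_eq0 HS odd_erased_row_live.
have odd_live l : ~~ erased S (2 * l + 1).
  case: (ltnP l k) => [lt_lk | le_kl]; last by rewrite /erased; apply/nandP; left; lia.
  have lt_node : (2 * l + 1 < 2 * k + 1)%N by lia.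
  have := congr1 (fun c : 'rV_(2 * k + 1) => c 0%R (node (2 * l + 1))) row0.
  rewrite /= (@codeword_odd _ _ l) ?val_node // mxE erased_node //.
  by case: (_ \in S) => // /eqP.
apply/setP => x; rewrite inE; apply/negbTE/negP => Sx.
have lt_x := ltn_ord x; have [odd_x | even_x] := boolP (odd x).
  have := odd_live x./2.
  have -> : 2 * x./2 + 1 = x by lia.
  by rewrite erasedE Sx.
have := no_lonely (ltac:(lia) : (x./2 <= k)%N); rewrite /lonely.
have -> : 2 * x./2 = x by lia.
have -> : x.+1 = 2 * x./2 + 1 by lia.
rewrite erasedE Sx (negbTE (odd_live _)) addn0.
case: (posnP x./2) => [// | half_gt0].
have -> : x.-1 = 2 * (x./2).-1 + 1 by lia.
by rewrite (negbTE (odd_live _)).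
Qed.

End NoLonelyBlock.

Lemma Gc_easy_repair_step S :
  correctable (Gc k) S -> S != set0 -> easy_repairable S.
Proof.
move=> HS S0; case: (boolP [exists m : 'I_k.+1, lonely S m]).
  by case/existsP=> m; apply: lonely_repair; rewrite -ltnS.
move/existsPn=> none.
have no_lonely m : (m <= k)%N -> ~~ lonely S m.
  by rewrite -ltnS => lt_m; apply: (none (Ordinal lt_m)).
by rewrite (no_lonely_set0 no_lonely HS) eqxx in S0.
Qed.

End GcCode.

Theorem theorem4p5 (k : nat) : (2 <= k)%N -> easy_repair_property (Gc k).
Proof.
move=> k_ge2; apply: easy_repair_property_of_step => S.
exact: (Gc_easy_repair_step (ltnW k_ge2)).
Qed.
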